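(* Every strictly incoherent operation (SIO) acting on a single qutrit $\mathcal{H}_3$ admits a Kraus decomposition $\Phi(\rho)=\sum_{n=1}^N K_n\rho K_n^\dagger$ with at most $N=13$ strictly incoherent Kraus operators.
   Context: Fix an orthonormal basis $\{|i\rangle\}_{i=1}^d$ of $\mathcal{H}_d$. A state is incoherent if it is diagonal in this basis; let $\mathcal{I}$ denote the set of incoherent states. A Kraus operator $K$ is incoherent if $K\rho K^\dagger/\mathrm{Tr}[K\rho K^\dagger]\in\mathcal{I}$ for all $\rho\in\mathcal{I}$ with nonzero trace (equivalently, each column of $K$ has at most one nonzero entry). A completely positive trace-preserving map $\Phi$ is a strictly incoherent operation (SIO) if it has a Kraus representation $\Phi(\rho)=\sum_n K_n\rho K_n^\dagger$, $\sum_n K_n^\dagger K_n=I$, such that both every $K_n$ and every $K_n^\dagger$ are incoherent (equivalently, each row and each column of each $K_n$ has at most one nonzero entry); such $K_n$ are called strictly incoherent Kraus operators. *)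

From HB Require Import structures.
From mathcomp Require Import all_boot all_order all_algebra.
From mathcomp Require Import reals.
From mathcomp Require Import complex.
Set Implicit Arguments. Unset Strict Implicit. Unset Printing Implicit Defensive.
Import Order.TTheory GRing.Theory Num.Theory.
Local Open Scope ring_scope.

Definition dag (R : realType) (m n : nat) (A : 'M[R[i]]_(m, n)) : 'M[R[i]]_(n, m) :=
  (map_mx (@conjc R) A)^T.

Definition psd (R : realType) (d : nat) (A : 'M[R[i]]_d) : Prop :=
  forall v : 'cV[R[i]]_d, 0 <= (dag v *m A *m v) 0 0.

Definition is_state (R : realType) (d : nat) (rho : 'M[R[i]]_d) : Prop :=
  psd rho /\ \tr rho = 1.

Definition diagonal (R : realType) (d : nat) (A : 'M[R[i]]_d) : Prop :=
  forall i j : 'I_d, i != j -> A i j = 0.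

Definition incoherent_state (R : realType) (d : nat) (rho : 'M[R[i]]_d) : Prop :=
  is_state rho /\ diagonal rho.

Definition incoherent_kraus (R : realType) (d : nat) (K : 'M[R[i]]_d) : Prop :=
  forall rho : 'M[R[i]]_d, incoherent_state rho ->
    \tr (K *m rho *m dag K) != 0 ->
    incoherent_state ((\tr (K *m rho *m dag K))^-1 *: (K *m rho *m dag K)).

Definition strictly_incoherent_kraus (R : realType) (d : nat) (K : 'M[R[i]]_d) : Prop :=
  incoherent_kraus K /\ incoherent_kraus (dag K).

Definition SIO_kraus_rep (R : realType) (d N : nat)
    (Phi : 'M[R[i]]_d -> 'M[R[i]]_d) (K : 'I_N -> 'M[R[i]]_d) : Prop :=
  (forall n, strictly_incoherent_kraus (K n)) /\
  \sum_(n < N) dag (K n) *m K n = 1%:M /\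
  (forall rho : 'M[R[i]]_d, Phi rho = \sum_(n < N) K n *m rho *m dag (K n)).

Definition SIO (R : realType) (d : nat) (Phi : 'M[R[i]]_d -> 'M[R[i]]_d) : Prop :=
  exists N (K : 'I_N -> 'M[R[i]]_d), SIO_kraus_rep Phi K.

(* A Kraus operator is incoherent iff each of its columns has at most one
   nonzero entry, so a strictly incoherent one is carried by the graph of a
   permutation q: it is  kraus_on q w = sum_b w_b |q b><b|.  The operators
   carried by a fixed q act jointly through the Gram matrix  sum_x x x^dagger
   of their weight vectors only, and Cholesky elimination rewrites any Gram
   matrix in dimension d as that of d - 1 vectors plus one vector supported
   at a prescribed point a.  Such a residual vector is carried equally well
   by every permutation agreeing with q at a.  Hence, given a chain
   q_0, ..., q_(p-1) of permutations covering all strictly incoherent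
   operators, with consecutive members agreeing at a point, merging the
   groups one after the other yields  p (d - 1) + 1  Kraus operators
   (SIO_kraus_bound).  For d = 3 the six permutations of {0, 1, 2} form such
   a chain, which is checked by finite computation; this gives 13. *)
Set Warnings "-notation-overridden,-ambiguous-paths,-notation-incompatible-prefix".
From HB Require Import structures.
From mathcomp Require Import all_boot all_order all_algebra.
From mathcomp Require Import reals complex ring.
Import Order.TTheory GRing.Theory Num.Theory.
Local Open Scope ring_scope.
Set Implicit Arguments. Unset Strict Implicit. Unset Printing Implicit Defensive.

Section Adjoint.
Variable R : realType.

Lemma dagE m n (A : 'M[R[i]]_(m, n)) i j : dag A i j = (A j i)^*%C.
Proof. by rewrite /dag !mxE. Qed.

Lemma dagM m n p (A : 'M[R[i]]_(m, n)) (B : 'M_(n, p)) :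
  dag (A *m B) = dag B *m dag A.
Proof. by rewrite /dag map_mxM trmx_mul. Qed.

Lemma dagK m n (A : 'M[R[i]]_(m, n)) : dag (dag A) = A.
Proof. by apply/matrixP=> i j; rewrite !dagE conjcK. Qed.

Lemma dag_delta m n (i : 'I_m) (j : 'I_n) :
  dag (delta_mx i j : 'M[R[i]]_(m, n)) = delta_mx j i.
Proof. by apply/matrixP=> a b; rewrite dagE !mxE conjc_nat andbC. Qed.

End Adjoint.

Section Incoherence.
Variables (R : realType) (d : nat).
Implicit Types (K M rho : 'M[R[i]]_d).

Lemma psd_diag_ge0 M i : psd M -> 0 <= M i i.
Proof.
move=> /(_ (delta_mx i 0)); rewrite dag_delta -rowE -colE.
by rewrite !mxE.
Qed.

Lemma psd_tr_ge0 M : psd M -> 0 <= \tr M.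
Proof. by move=> HM; apply: sumr_ge0 => i _; apply: psd_diag_ge0. Qed.

Lemma psd_conj K rho : psd rho -> psd (K *m rho *m dag K).
Proof.
move=> Hrho v.
have -> : dag v *m (K *m rho *m dag K) *m v = dag (dag K *m v) *m rho *m (dag K *m v).
  by rewrite dagM dagK !mulmxA.
exact: Hrho.
Qed.

Lemma conj_entry K rho i j :
  (K *m rho *m dag K) i j = \sum_l (\sum_k K i k * rho k l) * (K j l)^*%C.
Proof. by rewrite !mxE; apply: eq_bigr => l _; rewrite dagE mxE. Qed.

Lemma basis_state_incoherent k : incoherent_state (delta_mx k k : 'M[R[i]]_d).
Proof.
split; [split|].
- move=> v.
  rewrite -(mul_delta_mx (0 : 'I_1)) -dag_delta !mulmxA -mulmxA -dagM.
  by rewrite mxE big_ord1 dagE mulrC; apply: mulcJ_ge0.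
- rewrite /mxtrace (bigD1 k) //= big1 ?addr0; first by rewrite mxE !eqxx.
  by move=> a ak; rewrite mxE (negbTE ak).
- move=> a b ab; rewrite mxE; case: eqP => [ka|] //=; case: eqP => [kb|] //=.
  by move: ab; rewrite ka kb eqxx.
Qed.

Definition col_sparse K := forall i j k : 'I_d, i != j -> K i k = 0 \/ K j k = 0.

(* A Kraus operator is incoherent exactly when it is column-sparse:
   sufficiency is a direct computation of  K rho K^dagger  for diagonal rho,
   necessity is read off from the image of the basis state |k><k|. *)
Lemma col_sparse_incoherent K : col_sparse K -> incoherent_kraus K.
Proof.
move=> HK rho [[Hpsd _] Hdiag] Ht.
set M := K *m rho *m dag K in Ht *.
have Mpsd : psd M by apply: psd_conj.
have t_gt0 : 0 < \tr M by rewrite lt_def Ht psd_tr_ge0.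
split; [split|].
- move=> v; rewrite -scalemxAr -scalemxAl mxE.
  by apply: mulr_ge0; [rewrite invr_ge0 ltW | apply: Mpsd].
- by rewrite mxtraceZ mulVf.
- move=> i j ij; rewrite mxE /M conj_entry big1 ?mulr0 // => l _.
  rewrite (bigD1 l) //= big1 ?addr0; last first.
    by move=> k kl; rewrite Hdiag ?mulr0 // eq_sym.
  by case: (HK i j l ij) => ->; rewrite ?conjc0 ?mul0r ?mulr0.
Qed.

Lemma incoherent_col_sparse K : incoherent_kraus K -> col_sparse K.
Proof.
move=> HK i j k ij.
have Me a b : (K *m delta_mx k k *m dag K) a b = K a k * (K b k)^*%C.
  have -> : K *m delta_mx k k *m dag K = col k K *m dag (col k K).
    by rewrite colE dagM dag_delta !mulmxA; congr (_ *m _); rewrite -mulmxA mul_delta_mx.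
  by rewrite mxE big_ord1 dagE !mxE.
have [t0|tn0] := eqVneq (\tr (K *m delta_mx k k *m dag K)) 0.
  left; move: t0; rewrite /mxtrace (eq_bigr _ (fun a _ => Me a a)) => t0.
  have /eqP := @psumr_eq0P _ _ xpredT _ (fun a _ => mulcJ_ge0 (K a k)) t0 i isT.
  by rewrite mulf_eq0 conjc_eq0 orbb => /eqP.
have [_ Hd] := HK _ (basis_state_incoherent k) tn0.
move/eqP: (Hd i j ij); rewrite mxE Me !mulf_eq0 invr_eq0 (negbTE tn0) conjc_eq0 /=.
by case/orP => /eqP; [left | right].
Qed.

Lemma incoherent_krausP K : incoherent_kraus K <-> col_sparse K.
Proof. by split; [apply: incoherent_col_sparse | apply: col_sparse_incoherent]. Qed.

End Incoherence.

Section PermutationKraus.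
Variables (R : realType) (d : nat).
Local Notation vec := {ffun 'I_d -> R[i]}.
Implicit Types (q : 'I_d -> 'I_d) (K rho : 'M[R[i]]_d) (s t : seq vec).

Definition kraus_on q (w : 'I_d -> R[i]) : 'M[R[i]]_d :=
  \matrix_(a, b) if a == q b then w b else 0.

Definition supported q K := forall a b, K a b != 0 -> a = q b.

Lemma supportedP q K :
  reflect (supported q K) [forall a, forall b, (K a b != 0) ==> (a == q b)].
Proof.
apply: (iffP forallP) => [HK a b Kab | HK a]; last first.
  by apply/forallP => b; apply/implyP => /HK ->.
by have /forallP/(_ b)/implyP/(_ Kab)/eqP := HK a.
Qed.

Lemma supported_kraus_on q K : supported q K -> kraus_on q [ffun b => K (q b) b] = K.
Proof.
move=> HK; apply/matrixP => a b; rewrite !mxE ffunE.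
case: eqP => [-> //|ne]; apply/esym/eqP/negPn/negP => Kab; exact: ne (HK _ _ Kab).
Qed.

(* Along a permutation, the Kraus operator has at most one nonzero entry in
   every row and every column, hence is strictly incoherent. *)
Lemma kraus_on_strictly_incoherent q w :
  injective q -> strictly_incoherent_kraus (kraus_on q w).
Proof.
move=> q_inj; split; apply/incoherent_krausP => i j k ij.
- rewrite !mxE; case: (i =P q k) => [ik|]; last by left.
  by right; case: eqP => // jk; move: ij; rewrite ik jk eqxx.
- rewrite !dagE !mxE; case: (k =P q i) => [ki|]; last by left; rewrite conjc0.
  right; case: eqP => [kj|]; last by rewrite conjc0.
  by move: ij; rewrite (q_inj i j) ?eqxx // -ki -kj.
Qed.

Lemma kraus_on_agree q q' (w : 'I_d -> R[i]) a :
  (forall j, j != a -> w j = 0) -> q a = q' a -> kraus_on q w = kraus_on q' w.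
Proof.
move=> w_a qa; apply/matrixP => i j; rewrite !mxE.
by have [->|ja] := eqVneq j a; [rewrite qa | rewrite w_a //; case: ifP; case: ifP].
Qed.

Definition gram s (k l : 'I_d) : R[i] := \sum_(x <- s) x k * (x l)^*%C.

Lemma gram_nil k l : gram [::] k l = 0.
Proof. by rewrite /gram big_nil. Qed.

Lemma gram_cons x s k l : gram (x :: s) k l = x k * (x l)^*%C + gram s k l.
Proof. by rewrite /gram big_cons. Qed.

Lemma gram_cat s t k l : gram (s ++ t) k l = gram s k l + gram t k l.
Proof. by rewrite /gram big_cat. Qed.

Lemma gram_conj s k l : gram s l k = (gram s k l)^*%C.
Proof.
by rewrite /gram rmorph_sum; apply: eq_bigr => x _; rewrite rmorphM /= conjcK mulrC.
Qed.

Definition contrib q s rho : 'M[R[i]]_d :=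
  \sum_(x <- s) kraus_on q x *m rho *m dag (kraus_on q x).

Lemma contrib_entry q s rho i j :
  contrib q s rho i j =
  \sum_l \sum_k ((i == q k)%:R * (j == q l)%:R * rho k l) * gram s k l.
Proof.
have term (x : vec) : (kraus_on q x *m rho *m dag (kraus_on q x)) i j =
    \sum_l \sum_k ((i == q k)%:R * (j == q l)%:R * rho k l) * (x k * (x l)^*%C).
  rewrite conj_entry; apply: eq_bigr => l _; rewrite mulr_suml.
  apply: eq_bigr => k _; rewrite !mxE (fun_if (@conjc R)) conjc0.
  case: (i =P q k) => _; case: (j =P q l) => _; rewrite /= ?mulr0n ?mulr1n;
    rewrite ?(mul0r, mulr0, mul1r) //.
  by rewrite [RHS]mulrCA [RHS]mulrA.
rewrite /contrib summxE (eq_bigr _ (fun x _ => term x)) exchange_big.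
apply: eq_bigr => l _; rewrite exchange_big; apply: eq_bigr => k _.
by rewrite /gram mulr_sumr.
Qed.

(* The joint action of a family depends on it only through its Gram matrix:
   this is the freedom we exploit to shrink the Kraus decomposition. *)
Lemma contrib_gram q s t rho : gram s =2 gram t -> contrib q s rho = contrib q t rho.
Proof.
move=> st; apply/matrixP => i j; rewrite !contrib_entry.
by apply: eq_bigr => l _; apply: eq_bigr => k _; rewrite st.
Qed.

Lemma contrib_cat q s t rho : contrib q (s ++ t) rho = contrib q s rho + contrib q t rho.
Proof. by rewrite /contrib big_cat. Qed.

Lemma contrib_map q s rho :
  contrib q s rho = \sum_(W <- [seq kraus_on q x | x : vec <- s]) W *m rho *m dag W.
Proof. by rewrite /contrib big_map. Qed.

End PermutationKraus.

Section GramElimination.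
Variables (R : realType) (d : nat).
Local Notation vec := {ffun 'I_d -> R[i]}.
Implicit Types (s : seq vec).

(* One step of Cholesky elimination at the index b: the Gram matrix of s is
   w w^dagger plus the Gram matrix of a family s' vanishing at b, where
   w = G e_b / sqrt(G_bb); every index at which all of s vanishes stays a
   zero of w and of s'. *)
Lemma gram_peel s (b : 'I_d) :
  exists (w : vec) (s' : seq vec),
    [/\ gram s =2 gram (w :: s'),
        forall x, x \in s' -> x b = 0 &
        forall j, (forall x, x \in s -> x j = 0) ->
          w j = 0 /\ (forall x, x \in s' -> x j = 0)].
Proof.
have [Gbb0|Gbb_neq0] := eqVneq (gram s b b) 0.
  exists [ffun=> 0], s; split.
  - by move=> k l; rewrite gram_cons ffunE mul0r add0r.
  - move=> x xs; move/eqP: Gbb0; rewrite psumr_eq0 => [|y _]; last exact: mulcJ_ge0.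
    by move=> /allP/(_ x xs) /=; rewrite mulf_eq0 conjc_eq0 orbb => /eqP.
  - by move=> j sj; split; rewrite ?ffunE.
have [r Gbb_r] : exists r : R, gram s b b = (r%:C)%C.
  by apply/complex_realP/ger0_real/sumr_ge0 => x _; apply: mulcJ_ge0.
have r_ge0 : 0 <= r by rewrite -ler0c -Gbb_r; apply: sumr_ge0 => x _; apply: mulcJ_ge0.
pose sq : R[i] := ((Num.sqrt r)%:C)%C.
have sqsq : sq * sq = gram s b b by rewrite Gbb_r /sq -rmorphM -expr2 sqr_sqrtr.
have sqJ : sq^*%C = sq by rewrite /sq conjc_real.
have sq_neq0 : sq != 0 by apply: contraNneq Gbb_neq0 => e; rewrite -sqsq e mul0r.
clearbody sq.
pose w : vec := [ffun k => gram s k b / sq].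
pose f (x : vec) : vec := [ffun k => x k - w k * (x b / sq)].
have Gkb k : \sum_(x <- s) x k * (x b)^*%C = w k * sq by rewrite /w ffunE mulfVK.
have Gbl l : \sum_(x <- s) x b * (x l)^*%C = (w l)^*%C * sq.
  have := gram_conj s l b; rewrite /gram => ->.
  by rewrite /w ffunE rmorphM /= conjc_inv sqJ mulfVK.
exists w, (map f s); split.
- move=> k l; rewrite gram_cons /gram big_map.
  have expand x : f x k * (f x l)^*%C =
      x k * (x l)^*%C - ((w l)^*%C / sq) * (x k * (x b)^*%C)
      - (w k / sq) * (x b * (x l)^*%C) + (w k * (w l)^*%C / (sq * sq)) * (x b * (x b)^*%C).
    by rewrite !ffunE !(rmorphB, rmorphM) /= conjc_inv sqJ; field.
  rewrite (eq_bigr _ (fun x _ => expand x)) big_split /= !sumrB -!mulr_sumr.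
  rewrite Gkb Gbl -/(gram s b b) -sqsq /gram.
  by field.
- by move=> _ /mapP [x _ ->]; rewrite ffunE /w ffunE -sqsq; field.
- have Gj0 j : (forall x, x \in s -> x j = 0) -> w j = 0.
    by move=> sj; rewrite /w ffunE /gram big1_seq ?mul0r // => x /andP[_ /sj ->]; rewrite mul0r.
  move=> j sj; split; first exact: Gj0.
  by move=> _ /mapP [x xs ->]; rewrite ffunE sj // Gj0 // mul0r subr0.
Qed.

Lemma gram_elim s (js : seq 'I_d) :
  exists (ws s' : seq vec),
    [/\ size ws = size js, gram s =2 gram (ws ++ s') &
        forall x j, x \in s' -> j \in js -> x j = 0].
Proof.
elim: js => [|j js [ws [s' [size_ws G_ws s'_js]]]].
  by exists [::], s; split.
have [w [s'' [G_w s''_j s''_keep]]] := gram_peel s' j.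
exists (rcons ws w), s''; split.
- by rewrite size_rcons size_ws.
- by move=> k l; rewrite G_ws -cats1 -catA /= !gram_cat G_w.
- move=> x i xs; rewrite inE => /predU1P [-> | ijs]; first exact: s''_j.
  by apply: (proj2 (s''_keep i _)) => // y ys; apply: s'_js.
Qed.

Lemma gram_split s (a : 'I_d) :
  exists (ws : seq vec) (w : vec),
    [/\ size ws = d.-1, forall j, j != a -> w j = 0 & gram s =2 gram (rcons ws w)].
Proof.
have [ws [s' [size_ws G_ws s'_off]]] := gram_elim s (enum (predC1 a)).
have [w [s'' [G_w s''_a s''_keep]]] := gram_peel s' a.
have s''_off j : j != a -> forall x, x \in s'' -> x j = 0.
  by move=> ja; apply: (proj2 (s''_keep j _)) => x xs; apply: s'_off; rewrite // mem_enum.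
exists ws, w; split.
- by rewrite size_ws -cardE cardC1 card_ord.
- by move=> j ja; apply: (proj1 (s''_keep j _)) => x xs; apply: s'_off; rewrite // mem_enum.
- move=> k l; rewrite G_ws gram_cat G_w gram_cons -cats1 gram_cat gram_cons gram_nil.
  suff -> : gram s'' k l = 0 by [].
  rewrite /gram big1_seq // => x /andP[_ xs].
  by have [-> | ka] := eqVneq k a; [rewrite s''_a | rewrite s''_off] => //; rewrite mul0r.
Qed.

End GramElimination.

Section KrausBound.
Variables (R : realType) (d : nat).
Local Notation vec := {ffun 'I_d -> R[i]}.
Local Notation mat := 'M[R[i]]_d.

Lemma tr_mul_delta (M : mat) a b : \tr (M *m delta_mx b a) = M a b.
Proof.
rewrite -(mul_delta_mx (0 : 'I_1)) mulmxA -colE mxtrace_mulC -rowE.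
by rewrite /mxtrace big_ord1 !mxE.
Qed.

(* Two Kraus families implementing the same map have the same  sum K^dagger K:
   the entry (a, b) of  sum K^dagger K  is the trace of the image of |b><a|. *)
Lemma kraus_sum_eq p (A : 'I_p -> mat) (L : seq mat) :
  (forall rho, \sum_(n < p) A n *m rho *m dag (A n) = \sum_(W <- L) W *m rho *m dag W) ->
  \sum_(n < p) dag (A n) *m A n = \sum_(W <- L) dag W *m W.
Proof.
move=> AL; apply/matrixP => a b; rewrite !summxE.
have entry (W : mat) : (dag W *m W) a b = \tr (W *m delta_mx b a *m dag W).
  by rewrite mxtrace_mulC mulmxA tr_mul_delta.
rewrite (eq_bigr _ (fun n _ => entry (A n))) (eq_bigr _ (fun W _ => entry W)).
by rewrite -!raddf_sum AL.
Qed.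

Lemma kraus_rep_of_seq (Phi : mat -> mat) N (K : 'I_N -> mat) (L : seq mat) :
  SIO_kraus_rep Phi K -> (forall W, W \in L -> strictly_incoherent_kraus W) ->
  (forall rho, \sum_(n < N) K n *m rho *m dag (K n) = \sum_(W <- L) W *m rho *m dag W) ->
  SIO_kraus_rep Phi (fun j : 'I_(size L) => nth 0 L j).
Proof.
move=> [_ [K_tp Phi_K]] L_SI KL; split; [|split].
- by move=> j; apply/L_SI/mem_nth.
- by rewrite -K_tp (kraus_sum_eq KL) (big_nth 0) big_mkord.
- by move=> rho; rewrite Phi_K KL (big_nth 0) big_mkord.
Qed.

Variables (p : nat) (qs : nat -> 'I_d -> 'I_d) (aa : nat -> 'I_d).
Hypothesis qs_inj : forall m, (m <= p)%N -> injective (qs m).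
Hypothesis qs_agree : forall m, (m < p)%N -> qs m.+1 (aa m) = qs m (aa m).
Hypothesis qs_cover : forall K : mat,
  strictly_incoherent_kraus K -> exists2 m, (m < p)%N & supported (qs m) K.

(* Sorting the Kraus operators by the permutation carrying them. *)
Lemma regroup N (K : 'I_N -> mat) : (forall n, strictly_incoherent_kraus (K n)) ->
  exists S : nat -> seq vec, forall rho,
    \sum_(n < N) K n *m rho *m dag (K n) = \sum_(m < p) contrib (qs m) (S m) rho.
Proof.
move=> K_SI.
pose carriedb m n := (m < p)%N && [forall a, forall b, (K n a b != 0) ==> (a == qs m b)].
have carried_ex n : exists m, carriedb m n.
  by have [m mp /supportedP Km] := qs_cover (K_SI n); exists m; rewrite /carriedb mp.
pose idx n := ex_minn (carried_ex n).
have idxP n : (idx n < p)%N /\ supported (qs (idx n)) (K n).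
  by rewrite /idx; case: ex_minnP => m /andP[mp /supportedP Km] _.
pose S m := [seq [ffun b => K n (qs m b) b] | n <- enum 'I_N & idx n == m].
exists S => rho.
pose idx' n : 'I_p := Ordinal (proj1 (idxP n)).
rewrite (partition_big idx' xpredT) //; apply: eq_bigr => m _.
rewrite /contrib /S big_map big_filter big_enum_cond /=.
apply: eq_big => [n | n /eqP idx_n]; first by rewrite /idx'.
by rewrite supported_kraus_on // -idx_n; apply: (proj2 (idxP n)).
Qed.

(* At each step the residual joins the next group, whose Gram matrix is split
   into d - 1 vectors and a new residual supported at a_m; since q_m and
   q_(m+1) agree at a_m, that residual is also carried by q_(m+1). *)
Lemma chain_merge (S : nat -> seq vec) m : (m <= p)%N ->
  exists (L : seq mat) (r : vec),
    [/\ size L = (m * d.-1)%N, forall W, W \in L -> strictly_incoherent_kraus W &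
        forall rho, \sum_(k < m) contrib (qs k) (S k) rho =
                    \sum_(W <- L) W *m rho *m dag W + contrib (qs m) [:: r] rho].
Proof.
elim: m => [|m IH] mp.
  exists [::], [ffun=> 0]; split => // rho.
  rewrite big_ord0 big_nil add0r (@contrib_gram _ _ _ _ [::]) /contrib ?big_nil //.
  by move=> k l; rewrite gram_cons !gram_nil ffunE mul0r addr0.
have [L [r [size_L L_SI HL]]] := IH (ltnW mp).
have [ws [w [size_ws w_a G_w]]] := gram_split (r :: S m) (aa m).
exists (L ++ [seq kraus_on (qs m) x | x : vec <- ws]), w; split.
- by rewrite size_cat size_map size_L size_ws mulSnr.
- move=> W; rewrite mem_cat => /orP [/L_SI // | /mapP [x _ ->]].
  exact/kraus_on_strictly_incoherent/qs_inj/ltnW.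
- move=> rho; rewrite big_ord_recr /= HL big_cat -contrib_map -!addrA; congr (_ + _).
  rewrite -contrib_cat /= (contrib_gram _ _ G_w) -cats1 contrib_cat; congr (_ + _).
  by rewrite /contrib !big_seq1 (kraus_on_agree w_a (esym (qs_agree mp))).
Qed.

Theorem SIO_kraus_bound (Phi : mat -> mat) : SIO Phi ->
  exists N (K : 'I_N -> mat), (N <= p * d.-1 + 1)%N /\ SIO_kraus_rep Phi K.
Proof.
move=> [N [K HK]]; have [K_SI _] := HK.
have [S HS] := regroup K_SI.
have [L [r [size_L L_SI HL]]] := chain_merge S (leqnn p).
pose Lr := rcons L (kraus_on (qs p) r).
exists (size Lr), (fun j => nth 0 Lr j); split; first by rewrite size_rcons size_L addn1.
apply: kraus_rep_of_seq HK _ _ => [W | rho].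
- by rewrite mem_rcons inE => /predU1P [-> | /L_SI //]; apply/kraus_on_strictly_incoherent/qs_inj.
- by rewrite HS HL /Lr -cats1 big_cat /contrib !big_seq1.
Qed.

End KrausBound.

(* The six permutations of {0, 1, 2}, listed so that
   consecutive ones agree at a point, form a chain covering every partial
   permutation; chain3 m is the m-th of them (the last one for m >= 5). *)
Definition ord3 : seq 'I_3 := [:: @Ordinal 3 0 isT; @Ordinal 3 1 isT; @Ordinal 3 2 isT].

Lemma mem_ord3 (b : 'I_3) : b \in ord3.
Proof. by case: b => [[|[|[|n]]] Hn]. Qed.

Definition chain3_table : seq (seq nat) :=
  [:: [:: 0; 1; 2]; [:: 0; 2; 1]; [:: 1; 2; 0]; [:: 2; 1; 0]; [:: 2; 0; 1]; [:: 1; 0; 2]]%N.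

Definition chain3 (m : nat) (j : 'I_3) : 'I_3 :=
  nth ord0 ord3 (nth 0 (nth [:: 1; 0; 2] chain3_table m) j)%N.

(* chain3 m and chain3 m.+1 agree at chain3_point m. *)
Definition chain3_point (m : nat) : 'I_3 := nth ord0 ord3 (nth 0 [:: 0; 1; 2; 0; 1] m)%N.

Definition pmap3 (x y z : option 'I_3) (b : 'I_3) : option 'I_3 := nth None [:: x; y; z] b.

Definition opt3 : seq (option 'I_3) := None :: map Some ord3.

Definition pinjb (r : 'I_3 -> option 'I_3) : bool :=
  all (fun b1 => all (fun b2 => all (fun a =>
    ((r b1 == Some a) && (r b2 == Some a)) ==> (b1 == b2)) ord3) ord3) ord3.

Definition extendsb (q : 'I_3 -> 'I_3) (r : 'I_3 -> option 'I_3) : bool :=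
  all (fun b => all (fun a => (r b == Some a) ==> (a == q b)) ord3) ord3.

Lemma chain3_inj_check :
  all (fun m => all (fun x => all (fun y =>
    (chain3 m x == chain3 m y) ==> (x == y)) ord3) ord3) (iota 0 7).
Proof. by vm_compute. Qed.

Lemma chain3_agree_check :
  all (fun m => chain3 m.+1 (chain3_point m) == chain3 m (chain3_point m)) (iota 0 6).
Proof. by vm_compute. Qed.

Lemma chain3_cover_check :
  all (fun x => all (fun y => all (fun z => pinjb (pmap3 x y z) ==>
    has (fun m => extendsb (chain3 m) (pmap3 x y z)) (iota 0 6)) opt3) opt3) opt3.
Proof. by vm_compute. Qed.

Lemma chain3_inj m : (m <= 6)%N -> injective (chain3 m).
Proof.
move=> m6 x y.
have /allP/(_ m) := chain3_inj_check; rewrite mem_iota ltnS m6 => /(_ isT).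
by move=> /allP/(_ x (mem_ord3 x))/allP/(_ y (mem_ord3 y))/implyP H /eqP/H/eqP.
Qed.

Lemma chain3_agree m : (m < 6)%N -> chain3 m.+1 (chain3_point m) = chain3 m (chain3_point m).
Proof.
move=> m6; have /allP/(_ m) := chain3_agree_check.
by rewrite mem_iota m6 => /(_ isT)/eqP.
Qed.

Lemma pmap3E (r : 'I_3 -> option 'I_3) :
  pmap3 (r (@Ordinal 3 0 isT)) (r (@Ordinal 3 1 isT)) (r (@Ordinal 3 2 isT)) =1 r.
Proof. by move=> b; have := mem_ord3 b; rewrite !inE => /or3P [] /eqP ->. Qed.

Lemma opt3_all (x : option 'I_3) : x \in opt3.
Proof. by case: x => [b|] //; have := mem_ord3 b; rewrite !inE. Qed.

Lemma pinjb_ext r r' : r =1 r' -> pinjb r = pinjb r'.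
Proof. by move=> e; apply: eq_all => b1; apply: eq_all => b2; apply: eq_all => a; rewrite !e. Qed.

Lemma extendsb_ext q r r' : r =1 r' -> extendsb q r = extendsb q r'.
Proof. by move=> e; apply: eq_all => b; apply: eq_all => a; rewrite e. Qed.

Lemma chain3_extends (r : 'I_3 -> option 'I_3) :
  pinjb r -> exists2 m, (m < 6)%N & extendsb (chain3 m) r.
Proof.
move: chain3_cover_check => /allP/(_ _ (opt3_all (r (@Ordinal 3 0 isT)))).
move=> /allP/(_ _ (opt3_all (r (@Ordinal 3 1 isT)))).
move=> /allP/(_ _ (opt3_all (r (@Ordinal 3 2 isT)))).
rewrite (pinjb_ext (pmap3E r)) => /implyP check /check /hasP [m].
by rewrite mem_iota (extendsb_ext _ (pmap3E r)) => /andP[_ m6] Hm; exists m.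
Qed.

(* Every strictly incoherent Kraus operator on a qutrit is carried by one of
   the first six permutations of the chain: column b of K determines the
   partial map b |-> (row of its nonzero entry), which is injective since
   rows are sparse too, and the finite check extends it along the chain. *)
Lemma chain3_cover (R : realType) (K : 'M[R[i]]_3) :
  strictly_incoherent_kraus K -> exists2 m, (m < 6)%N & supported (chain3 m) K.
Proof.
move=> [/incoherent_krausP K_col /incoherent_krausP K_row].
pose r b := [pick a | K a b != 0].
have r_nz a b : r b = Some a -> K a b != 0.
  by rewrite /r; case: pickP => // a' Ka' [<-].
have r_some a b : K a b != 0 -> r b = Some a.
  rewrite /r => Kab; case: pickP => [a' Ka' | /(_ a)]; last by rewrite Kab.
  congr Some; apply/eqP/negPn/negP => a'a.
  by case: (K_col a' a b a'a) => /eqP; rewrite ?(negbTE Ka') ?(negbTE Kab).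
have r_pinj : pinjb r.
  apply/allP => b1 _; apply/allP => b2 _; apply/allP => a _; apply/implyP.
  move=> /andP[/eqP /r_nz Kab1 /eqP /r_nz Kab2]; apply/negPn/negP => b12.
  case: (K_row b1 b2 a b12); rewrite dagE => /eqP; rewrite conjc_eq0.
  - by rewrite (negbTE Kab1).
  - by rewrite (negbTE Kab2).
have [m m6 /allP Hm] := chain3_extends r_pinj; exists m => // a b Kab.
have /allP/(_ a (mem_ord3 a))/implyP := Hm b (mem_ord3 b).
by rewrite (r_some a b Kab) eqxx => /(_ isT)/eqP.
Qed.

Unset Implicit Arguments.

(* Theorem 2: with the chain of the six permutations of the qutrit basis,
   SIO_kraus_bound gives  6 * (3 - 1) + 1 = 13  Kraus operators. *)
Theorem theorem2 (R : realType) (Phi : 'M[R[i]]_3 -> 'M[R[i]]_3) :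
  SIO Phi ->
  exists (N : nat) (K : 'I_N -> 'M[R[i]]_3), (N <= 13)%N /\ SIO_kraus_rep Phi K.
Proof.
apply: (@SIO_kraus_bound R 3 6 chain3 chain3_point).
- exact: chain3_inj.
- exact: chain3_agree.
- exact: chain3_cover.
Qed.
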